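(* Let $(G,\sigma)$ be a vertex-oriented 4-regular plane graph with a vertex $v$ such that $V(G)\setminus\{v\}$ is the disjoint union of two nonempty sets $A_1,A_2$, and the edges of $G$ not having both endpoints in the same set $A_1$ or $A_2$ are exactly six: two edges $e_1,e_2$ joining $v$ to $A_1$, two edges $e_3,e_4$ joining $v$ to $A_2$, and two edges $t,b$ each joining a vertex of $A_1$ to a vertex of $A_2$ (endpoints need not be distinct). Suppose $\sigma(v)=\{\{e_1,e_2\},\{e_3,e_4\}\}$, and that $G$ is drawn so that there are disjoint simple closed curves $S_1,S_2$ with $A_i$ inside $S_i$, $v$ outside both, the edges $t,e_1,e_2,b$ crossing $S_1$ in this cyclic order and $t,e_3,e_4,b$ crossing $S_2$ correspondingly. Let $G_1$ be the graph with vertex set $A_1\cup\{v_1\}$ ($v_1$ a new vertex) whose edges are the edges of $G$ with both ends in $A_1$, the edges $e_1,e_2$ with endpoint $v$ replaced by $v_1$, and new edges $t_1,b_1$ joining $v_1$ to the $A_1$-endpoints of $t$ and $b$ respectively; let $\sigma_1$ agree with $\sigma$ on $A_1$ (with $t_1,b_1$ in place of $t,b$) and $\sigma_1(v_1)=\{\{e_1,e_2\},\{t_1,b_1\}\}$. Define $(G_2,\sigma_2)$ symmetrically using $A_2$, $e_3,e_4$, a new vertex $v_2$, new edges $t_2,b_2$, and $\sigma_2(v_2)=\{\{e_3,e_4\},\{t_2,b_2\}\}$. If $(G_1,\sigma_1)$ and $(G_2,\sigma_2)$ both admit $k$-o-colourings, then $(G,\sigma)$ admits a $k$-o-colouring.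
   Context: Graphs may have loops and multiple edges. A 4-regular plane graph has a fixed planar embedding giving a cyclic (embedding) order of the four edge-ends at each vertex. Orientation of a vertex $v$: if $v$ has no loop, a partition of its four edges into two cells of two edges, each cell consisting of two edges consecutive in the embedding order at $v$; if $v$ has exactly one loop $e$ and other edges $f,g$, either $\{\{e,f\},\{e,g\}\}$ (transverse) or $\{\{f,g\},\{e\}\}$ (nontransverse); if $v$ has two loops $e_1,e_2$, the single cell $\{e_1,e_2\}$. A vertex-orientation assigns an orientation to each vertex. An o-colouring of $(G,\sigma)$ is an assignment of colours to edges such that at every vertex $v$ exactly two distinct colours appear on its incident edges and each cell of $\sigma(v)$ contains edges of both colours; a $k$-o-colouring uses at most $k$ colours. (Whether a colouring is an o-colouring depends only on the cells of the orientation, not on the embedding.) *)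

From HB Require Import structures.
From mathcomp Require Import all_boot.
Set Implicit Arguments. Unset Strict Implicit. Unset Printing Implicit Defensive.

(* A graph (loops and multiple edges allowed) is given by a vertex finType V,
   an edge finType E and an endpoint map ends : E -> V * V.
   Edge-ends ("darts") are the elements of E * bool:
   (e, true) is the end at (ends e).1, (e, false) the end at (ends e).2. *)

Definition incident (V E : finType) (ends : E -> V * V) (x : V) : {set E} :=
  [set e | ((ends e).1 == x) || ((ends e).2 == x)].

Definition loops_at (V E : finType) (ends : E -> V * V) (x : V) : {set E} :=
  [set e | ((ends e).1 == x) && ((ends e).2 == x)].

Definition dvert (V E : finType) (ends : E -> V * V) (d : E * bool) : V :=
  if d.2 then (ends d.1).1 else (ends d.1).2.

Definition dflip (E : finType) (d : E * bool) : E * bool := (d.1, ~~ d.2).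

(* 4-regular: every vertex has exactly four edge-ends (a loop counts twice). *)
Definition four_regular (V E : finType) (ends : E -> V * V) : Prop :=
  forall x : V, #|[set d : E * bool | dvert ends d == x]| = 4.

(* Embedding (rotation system): rot is a permutation of the edge-ends whose
   cycles are exactly the sets of edge-ends at each vertex; it gives the
   cyclic embedding order at each vertex. *)
Definition rotation_system (V E : finType) (ends : E -> V * V)
    (rot : E * bool -> E * bool) : Prop :=
  [/\ injective rot,
      (forall d, dvert ends (rot d) = dvert ends d) &
      (forall d d', dvert ends d = dvert ends d' -> fconnect rot d d')].

(* Planarity of the embedding: Euler's formula  V + F = E + 2 * (#components),
   i.e. every component has genus 0.  Faces are the orbits of rot \o dflip. *)
Definition plane_rotation (E : finType) (rot : E * bool -> E * bool) : Prop :=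
  fcard rot predT + fcard (fun d => rot (dflip d)) predT
  = #|E| + 2 * n_comp (fun d d' => (d' == rot d) || (d' == dflip d)) predT.

Definition valid_orientation (V E : finType) (ends : E -> V * V)
    (rot : E * bool -> E * bool) (x : V) (C : {set {set E}}) : Prop :=
  [\/ loops_at ends x = set0 /\
        (exists d, dvert ends d = x /\
           C = [set [set d.1; (rot d).1];
                    [set (rot (rot d)).1; (rot (rot (rot d))).1]]),
      (exists e f g, [/\ loops_at ends x = [set e], incident ends x = [set e; f; g],
          uniq [:: e; f; g] &
          (C = [set [set e; f]; [set e; g]] \/ C = [set [set f; g]; [set e]])]) |
      (exists e1 e2, [/\ e1 != e2, loops_at ends x = [set e1; e2] &
          C = [set [set e1; e2]]])].

Definition vertex_orientation (V E : finType) (ends : E -> V * V)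
    (rot : E * bool -> E * bool) (sigma : V -> {set {set E}}) : Prop :=
  forall x, valid_orientation ends rot x (sigma x).

Definition o_colouring (V E Col : finType) (ends : E -> V * V)
    (sigma : V -> {set {set E}}) (col : E -> Col) : Prop :=
  forall x : V, #|col @: incident ends x| = 2 /\
    (forall c, c \in sigma x ->
       exists e e', [/\ e \in c, e' \in c & col e != col e']).

Definition k_o_colourable (V E : finType) (ends : E -> V * V)
    (sigma : V -> {set {set E}}) (k : nat) : Prop :=
  exists col : E -> 'I_k, o_colouring ends sigma col.

Definition in_side (V E : finType) (ends : E -> V * V) (A : {set V}) (e : E) : bool :=
  ((ends e).1 \in A) && ((ends e).2 \in A).

Definition joins (V E : finType) (ends : E -> V * V) (e : E) (x : V) (A : {set V}) : bool :=
  ((ends e).1 == x) && ((ends e).2 \in A) || ((ends e).2 == x) && ((ends e).1 \in A).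

Definition joins_sets (V E : finType) (ends : E -> V * V) (e : E) (A B : {set V}) : bool :=
  ((ends e).1 \in A) && ((ends e).2 \in B) || ((ends e).2 \in A) && ((ends e).1 \in B).

(* ---- the side graph (G_i, sigma_i) ----
   Vertices: Some x for x in A, and None for the new vertex v_i.
   Edges: inl e for edges e of G with both ends in A or e in {ea, eb};
          inr true = t_i,  inr false = b_i. *)
Definition side_pred (V E : finType) (ends : E -> V * V) (A : {set V}) (ea eb : E)
  (e : E) : bool := in_side ends A e || (e == ea) || (e == eb).


Definition sideE (V E : finType) (ends : E -> V * V) (A : {set V}) (ea eb : E) :=
  ({e : E | side_pred ends A ea eb e} + bool)%type.

Definition endpoint_in (V E : finType) (ends : E -> V * V) (A : {set V}) (e : E) : V :=
  if (ends e).1 \in A then (ends e).1 else (ends e).2.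

(* vertices of G outside A (in particular v) are sent to the new vertex None *)
Definition vproj (V : finType) (A : {set V}) (x : V) : option {x : V | x \in A} :=
  insub x.

Definition side_back (V E : finType) (ends : E -> V * V) (A : {set V}) (ea eb tt bb : E)
  (e : sideE ends A ea eb) : E :=
  match e with inl e' => val e' | inr true => tt | inr false => bb end.

Definition side_ends (V E : finType) (ends : E -> V * V) (A : {set V}) (ea eb tt bb : E)
  (e : sideE ends A ea eb) : option {x : V | x \in A} * option {x : V | x \in A} :=
  match e with
  | inl e' => (vproj A (ends (val e')).1, vproj A (ends (val e')).2)
  | inr true => (None, vproj A (endpoint_in ends A tt))
  | inr false => (None, vproj A (endpoint_in ends A bb))
  end.

Definition side_orient (V E : finType) (ends : E -> V * V) (sigma : V -> {set {set E}})
  (A : {set V}) (ea eb tt bb : E) (y : option {x : V | x \in A})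
  : {set {set sideE ends A ea eb}} :=
  match y with
  | Some x => [set [set e | @side_back V E ends A ea eb tt bb e \in c] | c : {set E} in sigma (val x)] 
  | None => [set [set e | @side_back V E ends A ea eb tt bb e \in [set ea; eb]];
                 [set (inr true : sideE ends A ea eb); inr false]]
  end.

From HB Require Import structures.
From mathcomp Require Import all_boot all_fingroup.
Set Implicit Arguments. Unset Strict Implicit. Unset Printing Implicit Defensive.

(* Let cs1, cs2 be k-o-colourings of the side graphs G1, G2.  At the new
   vertex v_i the cell {t_i, b_i} forces cs_i(t_i) != cs_i(b_i), so some
   permutation g of the colours maps cs2(t_2), cs2(b_2) to cs1(t_1), cs1(b_1);
   g \o cs2 is still an o-colouring of G2.  Colour each edge of G by the side
   graph it lives in (t and b by t_1, b_1).  A vertex of A_i sees, through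
   side_back, exactly the edges of the corresponding vertex of G_i with the
   same colours and cells, so it is properly coloured.  At v_i the two cells
   give {col e1, col e2} = {col t, col b} = {col e3, col e4} with col t != col b,
   which is exactly what v needs for sigma(v) = {{e1,e2},{e3,e4}}. *)

Definition o_coloured_at (V E C : finType) (ends : E -> V * V)
    (sigma : V -> {set {set E}}) (col : E -> C) (x : V) : Prop :=
  #|col @: incident ends x| = 2 /\
  (forall c, c \in sigma x -> exists e e', [/\ e \in c, e' \in c & col e != col e']).

Lemma o_colouring_recolour (V E C C' : finType) (ends : E -> V * V)
    (sigma : V -> {set {set E}}) (col : E -> C) (g : C -> C') :
  injective g -> o_colouring ends sigma col -> o_colouring ends sigma (g \o col).
Proof.
move=> g_inj col_ok x; have [card_col cells] := col_ok x; split.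
  by rewrite imset_comp card_imset.
move=> c /cells [e [e' [ec e'c ne]]]; exists e, e'.
by rewrite /= (inj_eq g_inj).
Qed.

Lemma recolour_pair (T : finType) (a b c d : T) :
  a != b -> c != d -> exists g : {perm T}, g a = c /\ g b = d.
Proof.
move=> ab cd; pose p := tperm a c; exists (p * tperm (p b) d)%g.
rewrite !permM tpermL tpermL; split=> //; apply: tpermD; last by rewrite eq_sym.
by rewrite -[X in _ != X](tpermL a c) (inj_eq perm_inj) eq_sym.
Qed.

Lemma pair_of_card2 (T : finType) (S : {set T}) (x y : T) :
  #|S| = 2 -> x \in S -> y \in S -> x != y -> S = [set x; y].
Proof.
move=> cardS xS yS xy; apply/eqP; rewrite eq_sym eqEcard cards2 xy cardS andbT.
by apply/subsetP => z; rewrite !inE => /orP[] /eqP ->.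
Qed.

Lemma pair_distinct (T C : finType) (f : T -> C) (p q e e' : T) :
  e \in [set p; q] -> e' \in [set p; q] -> f e != f e' -> f p != f q.
Proof.
by rewrite !inE => /orP[] /eqP -> /orP[] /eqP ->; rewrite ?eqxx // eq_sym.
Qed.

Section SideGraph.
Variables (V E : finType) (ends : E -> V * V) (sigma : V -> {set {set E}}).
Variables (A : {set V}) (ea eb te be : E).
Local Notation SE := (@side_ends V E ends A ea eb te be).
Local Notation SB := (@side_back V E ends A ea eb te be).
Local Notation SO := (@side_orient V E ends sigma A ea eb te be).

Lemma vproj_in (x : V) (xA : x \in A) : vproj A x = Some (exist _ x xA).
Proof. by rewrite /vproj (insubT (fun y => y \in A) xA). Qed.

Lemma vproj_out (x : V) : x \notin A -> vproj A x = None.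
Proof. by move=> xA; rewrite /vproj insubN. Qed.

Lemma vproj_Some (x : V) (y : {x | x \in A}) : vproj A x = Some y -> x = val y.
Proof. by rewrite /vproj; case: insubP => [u _ <- [->]|]. Qed.

Lemma endpoint_in_incident (e : E) : e \in incident ends (endpoint_in ends A e).
Proof. by rewrite inE /endpoint_in; case: ifP; rewrite eqxx ?orbT. Qed.

Lemma endpoint_in_at (x : V) (e : E) : x \in A -> ~~ in_side ends A e ->
  e \in incident ends x -> endpoint_in ends A e = x.
Proof.
move=> xA; rewrite inE /endpoint_in /in_side; case: (ends e) => p q /=.
move=> out /orP[] /eqP xE; subst; case: ifP => // pA.
- by rewrite xA in pA.
- by rewrite pA xA in out.
Qed.

Lemma side_incident (x : V) (xA : x \in A) :
  ~~ in_side ends A te -> ~~ in_side ends A be ->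
  {subset incident ends x <= [pred e | [|| side_pred ends A ea eb e, e == te | e == be]]} ->
  incident ends x = SB @: incident SE (Some (exist _ x xA)).
Proof.
move=> te_out be_out edges_x; apply/setP => e; apply/idP/idP.
- move=> ex; have /or3P[se|/eqP ete|/eqP ebe] := edges_x e ex.
  + apply/imsetP; exists (inl (exist _ e se)) => //.
    by move: ex; rewrite !inE /= => /orP[] /eqP ->; rewrite (vproj_in xA) eqxx ?orbT.
  + subst e; apply/imsetP; exists (inr true) => //.
    by rewrite inE /= (endpoint_in_at xA) // (vproj_in xA).
  + subst e; apply/imsetP; exists (inr false) => //.
    by rewrite inE /= (endpoint_in_at xA) // (vproj_in xA).
- case/imsetP => -[[e' se']|[]]; rewrite inE /= => + ->.
  + by rewrite inE; case/orP => /eqP /vproj_Some ->; rewrite eqxx ?orbT.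
  + by move=> /eqP /vproj_Some /= <-; apply: endpoint_in_incident.
  + by move=> /eqP /vproj_Some /= <-; apply: endpoint_in_incident.
Qed.

Lemma side_coloured_at (C : finType) (cs : @sideE V E ends A ea eb -> C) (col : E -> C)
    (x : V) (xA : x \in A) :
  o_colouring SE SO cs -> (forall s, col (SB s) = cs s) ->
  ~~ in_side ends A te -> ~~ in_side ends A be ->
  {subset incident ends x <= [pred e | [|| side_pred ends A ea eb e, e == te | e == be]]} ->
  o_coloured_at ends sigma col x.
Proof.
move=> cs_ok col_SB te_out be_out edges_x.
have [card_cs cells] := cs_ok (Some (exist _ x xA)).
split; first by rewrite (side_incident xA) // -imset_comp (eq_imset _ col_SB).
move=> c cx; have [|e [e' [ec e'c ne]]] := cells [set e | SB e \in c].
  by apply/imsetP; exists c.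
by exists (SB e), (SB e'); rewrite !inE in ec e'c; rewrite -!col_SB in ne.
Qed.

Lemma new_vertex_tb (C : finType) (cs : @sideE V E ends A ea eb -> C) :
  o_colouring SE SO cs -> cs (inr true) != cs (inr false).
Proof.
move=> cs_ok; have [_ cells] := cs_ok None.
have [|s [s' [sX s'X]]] := cells [set inr true; inr false].
  by rewrite !inE eqxx orbT.
exact: pair_distinct.
Qed.

(* The new vertex sees exactly two colours, those of te and be, and its
   cell {ea, eb} is bichromatic: so ea, eb carry the colours of te, be. *)
Lemma new_vertex_colours (C : finType) (cs : @sideE V E ends A ea eb -> C) (col : E -> C)
    (v : V) :
  o_colouring SE SO cs -> (forall s, col (SB s) = cs s) ->
  v \notin A -> joins ends ea v A -> joins ends eb v A ->
  col te != col be /\ [set col ea; col eb] = [set col te; col be].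
Proof.
move=> cs_ok col_SB vA ea_v eb_v.
have [card_cs cells] := cs_ok None.
have tb : col te != col be.
  by rewrite (col_SB (inr true)) (col_SB (inr false)) new_vertex_tb.
have ab : col ea != col eb.
  have [|s [s' [sX s'X]]] := cells [set s | SB s \in [set ea; eb]].
    by rewrite !inE eqxx.
  by rewrite inE in sX; rewrite inE in s'X; rewrite -!col_SB; apply: pair_distinct.
have at_new s : s \in incident SE None -> col (SB s) \in cs @: incident SE None.
  by move=> s_new; rewrite col_SB imset_f.
have at_new_side e (se : side_pred ends A ea eb e) :
    joins ends e v A -> col e \in cs @: incident SE None.
  move=> e_v; apply: (at_new (inl (exist _ e se))); rewrite inE /=.
  by case/orP: e_v => /andP[/eqP -> _]; rewrite (vproj_out vA) ?eqxx ?orbT.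
have side_a : side_pred ends A ea eb ea by rewrite /side_pred eqxx orbT.
have side_b : side_pred ends A ea eb eb by rewrite /side_pred eqxx orbT.
have image_ab := pair_of_card2 card_cs (at_new_side _ side_a ea_v)
  (at_new_side _ side_b eb_v) ab.
have image_tb : cs @: incident SE None = [set col te; col be].
  apply: pair_of_card2 => //.
  - by apply: (at_new (inr true)); rewrite inE eqxx.
  - by apply: (at_new (inr false)); rewrite inE eqxx.
by split=> //; rewrite -image_ab image_tb.
Qed.
End SideGraph.

Lemma incident_in_side (V E : finType) (ends : E -> V * V) (A : {set V}) (e : E) (x : V) :
  in_side ends A e -> e \in incident ends x -> x \in A.
Proof. by rewrite /in_side inE => /andP[e1A e2A] /orP[] /eqP <-. Qed.

Lemma joins_incident (V E : finType) (ends : E -> V * V) (e : E) (v : V) (B : {set V})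
    (x : V) :
  joins ends e v B -> e \in incident ends x -> x != v -> x \in B.
Proof.
rewrite /joins inE; case: (ends e) => p q /=.
by case/orP=> /andP[/eqP -> qB] /orP[] /eqP <-; rewrite ?eqxx.
Qed.

Lemma joins_incident_pivot (V E : finType) (ends : E -> V * V) (e : E) (v : V)
    (B : {set V}) :
  joins ends e v B -> e \in incident ends v.
Proof. by rewrite /joins inE => /orP[] /andP[-> _]; rewrite ?orbT. Qed.

Lemma edges_at_side (V E : finType) (ends : E -> V * V) (A B : {set V}) (v : V)
    (ea eb ec ed t b : E) (x : V) :
  [disjoint A & B] -> v \notin A ->
  joins ends ec v B -> joins ends ed v B ->
  (forall e, ~~ in_side ends A e -> ~~ in_side ends B e ->
     e \in [:: ea; eb; ec; ed; t; b]) ->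
  x \in A ->
  {subset incident ends x <= [pred e | [|| side_pred ends A ea eb e, e == t | e == b]]}.
Proof.
move=> disAB vA ec_v ed_v crossing xA e ex; rewrite inE /side_pred.
have xB : x \notin B by rewrite (disjointFr disAB xA).
have x_ne_v : x != v by apply: contraTneq xA => ->.
have [//|eA] := boolP (in_side ends A e).
have eB : ~~ in_side ends B e.
  by apply: contraNN xB => eB; apply: incident_in_side eB ex.
have ec_not_x : ec \notin incident ends x.
  by apply: contraNN xB => ecx; apply: joins_incident ec_v ecx x_ne_v.
have ed_not_x : ed \notin incident ends x.
  by apply: contraNN xB => edx; apply: joins_incident ed_v edx x_ne_v.
move: (crossing e eA eB); rewrite !inE.
case/orP=> [->|]; rewrite ?orbT //; case/orP=> [->|]; rewrite ?orbT //.
case/orP=> [/eqP eec|]; first by rewrite -eec ex in ec_not_x.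
case/orP=> [/eqP eed|]; first by rewrite -eed ex in ed_not_x.
by case/orP=> ->; rewrite ?orbT.
Qed.

Lemma pivot_coloured (V E C : finType) (ends : E -> V * V) (sigma : V -> {set {set E}})
    (col : E -> C) (v : V) (e1 e2 e3 e4 t b : E) :
  sigma v = [set [set e1; e2]; [set e3; e4]] ->
  {subset incident ends v <= [:: e1; e2; e3; e4; t; b]} ->
  e1 \in incident ends v -> e2 \in incident ends v ->
  col t != col b ->
  [set col e1; col e2] = [set col t; col b] ->
  [set col e3; col e4] = [set col t; col b] ->
  o_coloured_at ends sigma col v.
Proof.
move=> sigma_v edges_v e1v e2v tb c12 c34.
have pair_ne p q : [set col p; col q] = [set col t; col b] -> col p != col q.
  move=> cpq; apply/eqP => pq; have := cards2 (col t) (col b).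
  by rewrite -cpq pq setUid cards1 tb.
have in_tb e : e \in [:: e1; e2; e3; e4; t; b] -> col e \in [set col t; col b].
  have [in1 in2] : col e1 \in [set col t; col b] /\ col e2 \in [set col t; col b].
    by rewrite -c12 set21 set22.
  have [in3 in4] : col e3 \in [set col t; col b] /\ col e4 \in [set col t; col b].
    by rewrite -c34 set21 set22.
  move=> e6; rewrite !inE in e6.
  by case/orP: e6 => [|/orP[|/orP[|/orP[|/orP[]]]]] /eqP -> //; rewrite ?set21 ?set22.
have image_v : col @: incident ends v = [set col t; col b].
  apply/eqP; rewrite eqEsubset; apply/andP; split.
    by apply/subsetP => _ /imsetP[e /edges_v ev ->]; apply: in_tb.
  by rewrite -c12; apply/subsetP => c; rewrite !inE => /orP[] /eqP ->; apply: imset_f.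
split; first by rewrite image_v cards2 tb.
move=> c; rewrite sigma_v !inE => /orP[] /eqP ->.
- by exists e1, e2; rewrite !inE !eqxx orbT pair_ne.
- by exists e3, e4; rewrite !inE !eqxx orbT pair_ne.
Qed.

Lemma in_side_disjoint (V E : finType) (ends : E -> V * V) (A B : {set V}) (e : E) :
  [disjoint A & B] -> in_side ends A e -> ~~ in_side ends B e.
Proof. by move=> disAB /andP[e1A _]; rewrite /in_side (disjointFr disAB e1A). Qed.

Lemma side_pred_out (V E : finType) (ends : E -> V * V) (A : {set V}) (ea eb e : E) :
  ~~ in_side ends A e -> e \notin [:: ea; eb] -> ~~ side_pred ends A ea eb e.
Proof. by rewrite /side_pred !inE -orbA => /negbTE ->. Qed.

Section Decomposition.
Variables (V E : finType) (ends : E -> V * V) (sigma : V -> {set {set E}}).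
Variables (v : V) (A1 A2 : {set V}) (e1 e2 e3 e4 t b : E).
Local Notation six := [:: e1; e2; e3; e4; t; b].
Hypotheses (vA1 : v \notin A1) (vA2 : v \notin A2) (disA : [disjoint A1 & A2]).
Hypotheses (cover : A1 :|: A2 = [set~ v]) (uniq_six : uniq six).
Hypothesis six_edges :
  forall e, (~~ in_side ends A1 e && ~~ in_side ends A2 e) = (e \in six).
Hypotheses (e1_v : joins ends e1 v A1) (e2_v : joins ends e2 v A1).
Hypotheses (e3_v : joins ends e3 v A2) (e4_v : joins ends e4 v A2).
Hypothesis sigma_v : sigma v = [set [set e1; e2]; [set e3; e4]].
Local Notation side1 := (side_pred ends A1 e1 e2).
Local Notation side2 := (side_pred ends A2 e3 e4).
Local Notation outside e := (~~ in_side ends A1 e /\ ~~ in_side ends A2 e).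

Lemma six_outside (e : E) : e \in six -> outside e.
Proof. by rewrite -six_edges => /andP. Qed.

Lemma six_distinct :
  [/\ t != b, t \notin [:: e1; e2], b \notin [:: e1; e2],
      t \notin [:: e3; e4] & b \notin [:: e3; e4]].
Proof.
move: uniq_six; rewrite -[six]/([:: e1; e2; e3; e4] ++ [:: t; b]) cat_uniq /= !inE.
rewrite !negb_or => /and4P[_ /and3P[/and4P[-> -> -> ->] /and4P[-> -> -> ->] _] -> _].
by [].
Qed.

Lemma pivot_edges_distinct : e1 \notin [:: e3; e4] /\ e2 \notin [:: e3; e4].
Proof.
move: uniq_six; rewrite /= !inE !negb_or.
by case/and5P=> /and5P[_ -> -> _ _] /and4P[-> -> _ _].
Qed.

Lemma t_b_outside : outside t /\ outside b.
Proof. by split; apply: six_outside; rewrite !inE eqxx ?orbT. Qed.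

Lemma t_b_off_sides : [/\ ~~ side1 t, ~~ side1 b, ~~ side2 t & ~~ side2 b].
Proof.
have [[? ?] [? ?]] := t_b_outside; have [_ ? ? ? ?] := six_distinct.
by split; apply: side_pred_out.
Qed.

Lemma sides_disjoint (e : E) : side1 e -> ~~ side2 e.
Proof.
have [[e31 _] [e41 _] [_ e12] [_ e22]] :
    [/\ outside e3, outside e4, outside e1 & outside e2].
  by split; apply: six_outside; rewrite !inE eqxx ?orbT.
have [e1_off e2_off] := pivot_edges_distinct.
case/orP=> [/orP[e_in1|/eqP->]|/eqP->]; apply: side_pred_out => //.
- exact: in_side_disjoint disA e_in1.
- by rewrite !inE; apply/norP; split; apply: contraTneq e_in1 => ->.
Qed.

Lemma edges_at_A1 (x : V) : x \in A1 ->
  {subset incident ends x <= [pred e | [|| side1 e, e == t | e == b]]}.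
Proof.
apply: edges_at_side disA vA1 e3_v e4_v _ => e out1 out2.
by rewrite -six_edges out1 out2.
Qed.

Lemma edges_at_A2 (x : V) : x \in A2 ->
  {subset incident ends x <= [pred e | [|| side2 e, e == t | e == b]]}.
Proof.
apply: edges_at_side vA2 e1_v e2_v _; first by rewrite disjoint_sym.
move=> e out2 out1; have : e \in six by rewrite -six_edges out1 out2.
by rewrite -[six]/([:: e1; e2] ++ [:: e3; e4] ++ [:: t; b]) !mem_cat orbCA -!mem_cat.
Qed.

Lemma edges_at_pivot : {subset incident ends v <= six}.
Proof.
move=> e ev; rewrite -six_edges; apply/andP; split.
- by apply: contra vA1 => e_in1; apply: incident_in_side e_in1 ev.
- by apply: contra vA2 => e_in2; apply: incident_in_side e_in2 ev.
Qed.

Local Notation S1 := (@sideE V E ends A1 e1 e2).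
Local Notation S2 := (@sideE V E ends A2 e3 e4).
Local Notation back1 := (@side_back V E ends A1 e1 e2 t b).
Local Notation back2 := (@side_back V E ends A2 e3 e4 t b).

Definition glue (C : Type) (cs1 : S1 -> C) (cs2 : S2 -> C) (e : E) : C :=
  match (insub e : option {e | side1 e}) with
  | Some s => cs1 (inl s)
  | None => match (insub e : option {e | side2 e}) with
            | Some s => cs2 (inl s)
            | None => if e == t then cs1 (inr true) else cs1 (inr false)
            end
  end.

Lemma glue_side1 (C : Type) (cs1 : S1 -> C) (cs2 : S2 -> C) (s : S1) :
  glue cs1 cs2 (back1 s) = cs1 s.
Proof.
have [t_ne_b _ _ _ _] := six_distinct; have [t1 b1 t2 b2] := t_b_off_sides.
rewrite /glue; case: s => [s|[]] /=; first by rewrite valK.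
- by rewrite !insubN // eqxx.
- by rewrite !insubN // eq_sym (negbTE t_ne_b).
Qed.

Lemma glue_side2 (C : Type) (cs1 : S1 -> C) (cs2 : S2 -> C) :
  cs2 (inr true) = cs1 (inr true) -> cs2 (inr false) = cs1 (inr false) ->
  forall s, glue cs1 cs2 (back2 s) = cs2 s.
Proof.
move=> cs_t cs_b; have [t_ne_b _ _ _ _] := six_distinct.
have [t1 b1 t2 b2] := t_b_off_sides.
rewrite /glue; case=> [s|[]] /=.
- by rewrite insubN ?valK //; apply: contraTN (valP s) => /sides_disjoint.
- by rewrite !insubN // eqxx.
- by rewrite !insubN // eq_sym (negbTE t_ne_b).
Qed.

Lemma split_colourable (k : nat) :
  k_o_colourable (@side_ends V E ends A1 e1 e2 t b)
    (@side_orient V E ends sigma A1 e1 e2 t b) k ->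
  k_o_colourable (@side_ends V E ends A2 e3 e4 t b)
    (@side_orient V E ends sigma A2 e3 e4 t b) k ->
  k_o_colourable ends sigma k.
Proof.
move=> [cs1 ok1] [cs2 ok2].
have [g [g_t g_b]] := recolour_pair (new_vertex_tb ok2) (new_vertex_tb ok1).
have ok2' := o_colouring_recolour (@perm_inj _ g) ok2.
pose col := glue cs1 (g \o cs2).
have col1 := glue_side1 cs1 (g \o cs2).
have col2 := @glue_side2 _ cs1 (g \o cs2) g_t g_b.
have [tb c12] := new_vertex_colours ok1 col1 vA1 e1_v e2_v.
have [_ c34] := new_vertex_colours ok2' col2 vA2 e3_v e4_v.
have [[t1 t2] [b1 b2]] := t_b_outside.
exists col => x; have [->|x_ne_v] := eqVneq x v.
  apply: pivot_coloured sigma_v edges_at_pivot _ _ tb c12 c34.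
  - exact: joins_incident_pivot e1_v.
  - exact: joins_incident_pivot e2_v.
have : x \in A1 :|: A2 by rewrite cover !inE.
case/setUP => xA.
- exact: side_coloured_at ok1 col1 t1 b1 (edges_at_A1 xA).
- exact: side_coloured_at ok2' col2 t2 b2 (edges_at_A2 xA).
Qed.

End Decomposition.

Theorem lemma3p3 (V E : finType) (ends : E -> V * V) (rot : E * bool -> E * bool)
  (sigma : V -> {set {set E}}) (v : V) (A1 A2 : {set V})
  (e1 e2 e3 e4 t b : E) (k : nat) :
  (* (G, sigma) is a vertex-oriented 4-regular plane graph *)
  four_regular ends -> rotation_system ends rot -> plane_rotation rot ->
  vertex_orientation ends rot sigma ->
  (* V(G) \ {v} is the disjoint union of nonempty A1, A2 *)
  v \notin A1 -> v \notin A2 -> [disjoint A1 & A2] -> A1 :|: A2 = [set~ v] ->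
  A1 != set0 -> A2 != set0 ->
  (* the edges not inside A1 or A2 are exactly the six distinct edges *)
  uniq [:: e1; e2; e3; e4; t; b] ->
  (forall e, (~~ in_side ends A1 e && ~~ in_side ends A2 e)
             = (e \in [:: e1; e2; e3; e4; t; b])) ->
  joins ends e1 v A1 -> joins ends e2 v A1 ->
  joins ends e3 v A2 -> joins ends e4 v A2 ->
  joins_sets ends t A1 A2 -> joins_sets ends b A1 A2 ->
  sigma v = [set [set e1; e2]; [set e3; e4]] ->
  k_o_colourable (@side_ends V E ends A1 e1 e2 t b)
    (@side_orient V E ends sigma A1 e1 e2 t b) k ->
  k_o_colourable (@side_ends V E ends A2 e3 e4 t b)
    (@side_orient V E ends sigma A2 e3 e4 t b) k ->
  k_o_colourable ends sigma k.
Proof.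
move=> _ _ _ _ vA1 vA2 disA cover _ _ uniq_six six_edges e1_v e2_v e3_v e4_v _ _ sigma_v.
exact: (split_colourable vA1 vA2 disA cover uniq_six six_edges e1_v e2_v e3_v e4_v sigma_v).
Qed.
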